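(* The global Kuroda principle is strictly stronger than the local Kuroda principle: every descriptive $\mathsf{MS4}$-frame satisfying the global Kuroda principle satisfies the local Kuroda principle, and there is a finite $\mathsf{MS4}$-frame satisfying the local Kuroda principle but not the global Kuroda principle.
   Context: A descriptive $\mathsf{MS4}$-frame is $(Y,R,E)$ with $Y$ a Stone space, $R$ a continuous quasi-order, $E$ a continuous equivalence relation (continuous: $R[x]=\{y:xRy\}$ closed for all $x$, $R^{-1}[U]$ clopen for clopen $U$), such that $xEy$, $yRz$ imply $\exists u$ with $xRu$, $uEz$; finite $\mathsf{MS4}$-frames (with the discrete topology) are descriptive. $\operatorname{qmax}Y=\{x: xRy\Rightarrow yRx\}$; $xE_Ry$ iff $xRy$ and $yRx$. Global Kuroda principle: for every $x\in\operatorname{qmax}Y$, $E[x]\subseteq\operatorname{qmax}Y$. Local Kuroda principle: for every $x\in\operatorname{qmax}Y$ there is $y$ with $xE_Ry$ and $E[y]\subseteq\operatorname{qmax}Y$. *)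

From HB Require Import structures.
From mathcomp Require Import all_boot all_order.
From mathcomp Require Import boolp classical_sets topology.
Set Implicit Arguments. Unset Strict Implicit. Unset Printing Implicit Defensive.
Local Open Scope classical_set_scope.

Definition quasi_order {T : Type} (R : T -> T -> Prop) :=
  (forall x, R x x) /\ (forall x y z, R x y -> R y z -> R x z).

Definition equivalence_rel {T : Type} (E : T -> T -> Prop) :=
  (forall x, E x x) /\ (forall x y, E x y -> E y x) /\
  (forall x y z, E x y -> E y z -> E x z).

Definition ms4_commutation {T : Type} (R E : T -> T -> Prop) :=
  forall x y z, E x y -> R y z -> exists u, R x u /\ E u z.

Definition ms4_frame {T : Type} (R E : T -> T -> Prop) :=
  [/\ quasi_order R, equivalence_rel E & ms4_commutation R E].

Definition image_rel {T : Type} (R : T -> T -> Prop) (x : T) : set T :=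
  [set y | R x y].
Definition preimage_rel {T : Type} (R : T -> T -> Prop) (U : set T) : set T :=
  [set x | exists y, R x y /\ U y].

Definition stone_space (T : topologicalType) :=
  [/\ compact (@setT T), hausdorff_space T &
      forall (U : set T) (x : T), open U -> U x ->
        exists V : set T, [/\ clopen V, V x & V `<=` U]].

Definition continuous_rel {T : topologicalType} (R : T -> T -> Prop) :=
  (forall x, closed (image_rel R x)) /\
  (forall U : set T, clopen U -> clopen (preimage_rel R U)).

Definition descriptive_ms4_frame (T : topologicalType) (R E : T -> T -> Prop) :=
  [/\ stone_space T, ms4_frame R E, continuous_rel R & continuous_rel E].

Definition qmax {T : Type} (R : T -> T -> Prop) : set T :=
  [set x | forall y, R x y -> R y x].

Definition E_R {T : Type} (R : T -> T -> Prop) (x y : T) := R x y /\ R y x.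

Definition global_kuroda {T : Type} (R E : T -> T -> Prop) :=
  forall x, qmax R x -> image_rel E x `<=` qmax R.

Definition local_kuroda {T : Type} (R E : T -> T -> Prop) :=
  forall x, qmax R x -> exists y, E_R R x y /\ image_rel E y `<=` qmax R.

From HB Require Import structures.
From mathcomp Require Import all_boot all_order.
From mathcomp Require Import boolp classical_sets topology.

(* Since R is reflexive, global Kuroda yields local Kuroda with y := x; neither
   the topology nor the commutation law plays a role.  For strictness, take the
   points None < Some false ~ Some true: the two points Some _ form the
   quasi-maximal cluster above None, and E glues Some false to None.  Then
   E[Some false] leaves qmax R, but every quasi-maximal point lies in the cluster
   of Some true, whose E-class {Some true} stays inside qmax R. *)

Lemma local_kuroda_of_global (T : Type) (R E : T -> T -> Prop) :
  (forall x, R x x) -> global_kuroda R E -> local_kuroda R E.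
Proof. by move=> Rxx globalK x qx; exists x; split; [split | exact: globalK]. Qed.

Definition clusterR (x y : option bool) : Prop := (x == None) || (y != None).

Definition glueE (x y : option bool) : Prop :=
  (x == y) || (x != Some true) && (y != Some true).

Lemma qmax_clusterRP (x : option bool) : qmax clusterR x <-> x != None.
Proof.
split; last by case: x => // b _ [] // _; rewrite /clusterR.
by case: x => // /(_ (Some true)); rewrite /clusterR; apply.
Qed.

Lemma clusterR_ms4_frame : ms4_frame clusterR glueE.
Proof.
split.
- by split; rewrite /clusterR; [case=> [[]|] | case=> [[]|] [[]|] [[]|]].
- by split; [|split]; rewrite /glueE;
    [case=> [[]|] | case=> [[]|] [[]|] | case=> [[]|] [[]|] [[]|]].
- move=> x y z Exy Ryz.
  (* every point sees Some false, the E-mate of None *)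
  exists (if z is None then Some false else z).
  by move: Exy Ryz; rewrite /glueE /clusterR; case: x y z => [[]|] [[]|] [[]|].
Qed.

Lemma clusterR_local_kuroda : local_kuroda clusterR glueE.
Proof.
move=> x /qmax_clusterRP x_top; exists (Some true); split.
  by split; rewrite /clusterR ?orbT //; case: (x) x_top.
by move=> y; rewrite /image_rel /glueE /= orbF => /eqP <-; apply/qmax_clusterRP.
Qed.

Lemma clusterR_not_global_kuroda : ~ global_kuroda clusterR glueE.
Proof.
move=> globalK.
have top_false : qmax clusterR (Some false) by apply/qmax_clusterRP.
by have /qmax_clusterRP := globalK _ top_false None isT.
Qed.

Theorem proposition4p3 :
  (forall (T : topologicalType) (R E : T -> T -> Prop),
      descriptive_ms4_frame R E -> global_kuroda R E -> local_kuroda R E) /\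
  (exists (T : finType) (R E : T -> T -> Prop),
      [/\ ms4_frame R E, local_kuroda R E & ~ global_kuroda R E]).
Proof.
split.
  move=> T R E [_ [[Rxx _] _ _] _ _].
  exact: local_kuroda_of_global.
exists (option bool : finType), clusterR, glueE.
split.
- exact: clusterR_ms4_frame.
- exact: clusterR_local_kuroda.
- exact: clusterR_not_global_kuroda.
Qed.
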